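(* Let $\alpha>0$. Let $u_0:\mathbb{R}\to[0,1]$ be uniformly continuous with $u_0>0$ on $\mathbb{R}$, $\liminf_{x\to-\infty}u_0>0$, $\lim_{x\to+\infty}u_0=0$, of class $C^2$ and nonincreasing on $[\xi_0,+\infty)$ for some $\xi_0>0$, and such that $\varphi_0:=-\ln u_0$ satisfies $\varphi_0'=o(\varphi_0^{-\alpha})$ and $\varphi_0''=o(\varphi_0')$ as $x\to+\infty$. Let $\rho>0$ and define $$w(t,x):=\exp\Big\{1-\big[(1+\varphi_0(x))^{\alpha+1}-\rho(\alpha+1)t\big]^{\frac{1}{\alpha+1}}\Big\},\qquad x_0(t):=\sup\Big\{x\in\mathbb{R}: u_0(x)=\exp\big(1-(\rho(\alpha+1)t+1)^{\frac{1}{\alpha+1}}\big)\Big\}.$$ Then for any small $\varepsilon>0$ there exists $t^\#>0$, depending on $\varepsilon$, such that $$|w_{xx}(t,x)|<\varepsilon\frac{w(t,x)}{(1-\ln w(t,x))^\alpha}\quad\text{for all } x\ge x_0(t)\text{ and } t\ge t^\#.$$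
   Context: $w$ solves $w_t=\rho\, w/(1-\ln w)^\alpha$ with $w(0,\cdot)=u_0$; one has $w(t,x_0(t))=1$ and $0<w(t,x)\le1$ for $x\ge x_0(t)$. *)

From Stdlib Require Import Reals Lra.
From Coquelicot Require Import Coquelicot.
Open Scope R_scope.

Definition phi0 (u0 : R -> R) (x : R) : R := - ln (u0 x).

Definition wsol (u0 : R -> R) (alpha rho : R) (t x : R) : R :=
  exp (1 - Rpower (Rpower (1 + phi0 u0 x) (alpha + 1) - rho * (alpha + 1) * t)
                  (1 / (alpha + 1))).

Definition x0 (u0 : R -> R) (alpha rho : R) (t : R) : Rbar :=
  Lub_Rbar (fun x => u0 x = exp (1 - Rpower (rho * (alpha + 1) * t + 1) (1 / (alpha + 1)))).

Definition little_o_pinfty (f g : R -> R) : Prop :=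
  forall eps : R, 0 < eps -> exists M : R, forall x : R, M <= x -> Rabs (f x) <= eps * Rabs (g x).

From Stdlib Require Import Reals Lra Lia FunctionalExtensionality.
From Coquelicot Require Import Coquelicot.
Open Scope R_scope.

(* With A = 1 + phi0 and K = rho (alpha + 1) t we have w = exp (1 - S) where
   S = (A^(alpha+1) - K)^(1/(alpha+1)), so 1 - ln w = S.  Differentiating twice,
   w_xx = w_AA phi0'^2 + w_A phi0'', and after factoring out w / S^alpha every
   remaining term is bounded by (A^alpha |phi0'|)^2, by A^alpha |phi0'| or by
   A^alpha |phi0''| <= A^alpha |phi0'|, because S >= 1 and S^(alpha+1) >= 1 as soon
   as u0 has dropped below the level exp (1 - (K + 1)^(1/(alpha+1))) defining x0(t).
   Since phi0' = o(phi0^-alpha) and phi0'' = o(phi0'), these are small for large x,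
   and x >= x0(t) is large once t is, because u0 reaches that level only far right. *)

(** * Limits of products with a convergent factor *)

Definition bounded_seq (q : nat -> R) : Prop :=
  exists M, eventually (fun n => Rabs (q n) <= M).

Lemma is_LimSup_LimSup_seq (u : nat -> R) : is_LimSup_seq u (LimSup_seq u).
Proof. unfold LimSup_seq; destruct (ex_LimSup_seq u); auto. Qed.

Lemma is_LimInf_LimInf_seq (u : nat -> R) : is_LimInf_seq u (LimInf_seq u).
Proof. unfold LimInf_seq; destruct (ex_LimInf_seq u); auto. Qed.

Lemma LimSup_seq_plus_cvg (w e : nat -> R) (l : R) : is_lim_seq e l ->
  LimSup_seq (fun n => w n + e n) = Rbar_plus (LimSup_seq w) l.
Proof.
  intros He; apply is_LimSup_seq_unique.
  apply is_lim_seq_spec in He.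
  pose proof (is_LimSup_LimSup_seq w) as Hw.
  destruct (LimSup_seq w) as [s| |]; simpl in *.
  - intros eps. destruct (Hw (pos_div_2 eps)) as [Hinf [N1 Hev]].
    destruct (He (pos_div_2 eps)) as [N2 HN2]. simpl in *.
    split.
    + intros N. destruct (Hinf (max N N2)) as [n [Hn Hwn]]. exists n. split; [lia|].
      specialize (HN2 n ltac:(lia)). apply Rabs_def2 in HN2. lra.
    + exists (max N1 N2). intros n Hn. specialize (Hev n ltac:(lia)).
      specialize (HN2 n ltac:(lia)). apply Rabs_def2 in HN2. lra.
  - intros M N. destruct (He (mkposreal 1 Rlt_0_1)) as [N2 HN2].
    destruct (Hw (M + 1 - l) (max N N2)) as [n [Hn Hwn]]. exists n. split; [lia|].
    specialize (HN2 n ltac:(lia)). apply Rabs_def2 in HN2. simpl in HN2. lra.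
  - intros M. destruct (He (mkposreal 1 Rlt_0_1)) as [N2 HN2].
    destruct (Hw (M - 1 - l)) as [N1 HN1]. exists (max N1 N2). intros n Hn.
    specialize (HN1 n ltac:(lia)). specialize (HN2 n ltac:(lia)).
    apply Rabs_def2 in HN2. simpl in HN2. lra.
Qed.

Lemma LimInf_seq_plus_cvg (w e : nat -> R) (l : R) : is_lim_seq e l ->
  LimInf_seq (fun n => w n + e n) = Rbar_plus (LimInf_seq w) l.
Proof.
  intros He.
  rewrite <- (Rbar_opp_involutive (LimInf_seq _)), <- LimSup_seq_opp.
  replace (fun n => - (w n + e n)) with (fun n => - w n + - e n)
    by (apply functional_extensionality; intros; ring).
  rewrite (LimSup_seq_plus_cvg _ _ (- l)) by (now apply (is_lim_seq_opp e l)).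
  rewrite LimSup_seq_opp. destruct (LimInf_seq w); simpl; auto. f_equal; ring.
Qed.

Lemma Lim_seq_plus_null (w e : nat -> R) : is_lim_seq e 0 ->
  Lim_seq (fun n => w n + e n) = Lim_seq w.
Proof.
  intros He. unfold Lim_seq.
  now rewrite (LimSup_seq_plus_cvg _ _ _ He), (LimInf_seq_plus_cvg _ _ _ He), !Rbar_plus_0_r.
Qed.

Lemma bounded_seq_LimSup_LimInf (q : nat -> R) : bounded_seq q ->
  exists s i, LimSup_seq q = Finite s /\ LimInf_seq q = Finite i.
Proof.
  intros [M HM].
  assert (Hs : Rbar_le (LimSup_seq q) M).
  { rewrite <- (LimSup_seq_const M). apply LimSup_le.
    eapply filter_imp; [|exact HM]. intros n Hn. apply Rabs_le_between in Hn. lra. }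
  assert (Hi : Rbar_le (- M) (LimInf_seq q)).
  { rewrite <- (LimInf_seq_const (- M)). apply LimInf_le.
    eapply filter_imp; [|exact HM]. intros n Hn. apply Rabs_le_between in Hn. lra. }
  pose proof (LimSup_LimInf_seq_le q) as Hle.
  destruct (LimSup_seq q) as [s| |], (LimInf_seq q) as [i| |]; simpl in *;
    try contradiction; eauto.
Qed.

Lemma LimSup_LimInf_bounded_seq (q : nat -> R) (s i : R) :
  LimSup_seq q = Finite s -> LimInf_seq q = Finite i -> bounded_seq q.
Proof.
  intros Es Ei.
  pose proof (is_LimSup_LimSup_seq q) as Hs. pose proof (is_LimInf_LimInf_seq q) as Hi.
  rewrite Es in Hs. rewrite Ei in Hi.
  destruct (Hs (mkposreal 1 Rlt_0_1)) as [_ [N1 H1]].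
  destruct (Hi (mkposreal 1 Rlt_0_1)) as [_ [N2 H2]].
  exists (Rabs s + Rabs i + 1), (max N1 N2). intros n Hn.
  specialize (H1 n ltac:(lia)). specialize (H2 n ltac:(lia)). simpl in *.
  pose proof (Rle_abs s). pose proof (Rle_abs (- i)). rewrite Rabs_Ropp in *.
  pose proof (Rabs_pos s). pose proof (Rabs_pos i).
  apply Rabs_le. lra.
Qed.

Lemma real_Lim_seq_bounded_seq (q : nat -> R) : real (Lim_seq q) <> 0 -> bounded_seq q.
Proof.
  unfold Lim_seq. intros Hq.
  destruct (LimSup_seq q) as [s| |] eqn:Es, (LimInf_seq q) as [i| |] eqn:Ei;
    simpl in Hq; try (exfalso; apply Hq; simpl; field).
  exact (LimSup_LimInf_bounded_seq q s i Es Ei).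
Qed.

Lemma is_lim_seq_mult_null_bounded (a q : nat -> R) :
  is_lim_seq a 0 -> bounded_seq q -> is_lim_seq (fun n => a n * q n) 0.
Proof.
  intros Ha [M [N HM]].
  apply is_lim_seq_spec. apply is_lim_seq_spec in Ha. intros eps.
  assert (HM1 : 0 < Rabs M + 1) by (pose proof (Rabs_pos M); lra).
  destruct (Ha (mkposreal (eps / (Rabs M + 1)) ltac:(apply Rdiv_lt_0_compat;
    [apply cond_pos | lra]))) as [N' HN']. simpl in HN'.
  exists (max N N'). intros n Hn.
  specialize (HM n ltac:(lia)). specialize (HN' n ltac:(lia)).
  rewrite Rminus_0_r in *. rewrite Rabs_mult.
  pose proof (Rle_abs M). pose proof (Rabs_pos (a n)).
  apply Rle_lt_trans with (Rabs (a n) * (Rabs M + 1)); [apply Rmult_le_compat_l; lra|].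
  apply Rlt_div_r in HN'; lra.
Qed.

Lemma Lim_seq_mult_cvg_bounded (a q : nat -> R) (c : R) :
  is_lim_seq a c -> bounded_seq q ->
  Lim_seq (fun n => a n * q n) = Rbar_mult c (Lim_seq q).
Proof.
  intros Ha Hq.
  rewrite <- Lim_seq_scal_l, <- (Lim_seq_plus_null (fun n => c * q n) (fun n => (a n - c) * q n)).
  - apply Lim_seq_ext. intros n. ring.
  - apply is_lim_seq_mult_null_bounded; auto.
    replace 0 with (c - c) by ring. apply is_lim_seq_minus'; auto. apply is_lim_seq_const.
Qed.

Lemma real_Rbar_mult (c : R) (l : Rbar) : real (Rbar_mult c l) = c * real l.
Proof.
  destruct l as [l| |]; simpl; try ring;
    unfold Rbar_mult, Rbar_mult'; destruct Rle_dec; try destruct Rle_lt_or_eq_dec;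
    simpl; ring.
Qed.

Lemma Lim_seq_m_infty (u : nat -> R) :
  eventually (fun n => u n <= 0) -> LimInf_seq u = m_infty -> Lim_seq u = m_infty.
Proof.
  intros Hu Hi.
  assert (Hs : Rbar_le (LimSup_seq u) 0).
  { rewrite <- (LimSup_seq_const 0). now apply LimSup_le. }
  unfold Lim_seq. rewrite Hi. destruct (LimSup_seq u); simpl in *; easy.
Qed.

Lemma Lim_seq_mult_cvg_m_infty (a q : nat -> R) (c : R) :
  (forall n, q n <= 0) -> is_lim_seq a c -> 0 < c -> LimInf_seq q = m_infty ->
  Lim_seq (fun n => a n * q n) = m_infty.
Proof.
  intros Hq Ha Hc Ei.
  assert (Hpos : eventually (fun n => c / 2 < a n)).
  { apply is_lim_seq_spec in Ha. destruct (Ha (pos_div_2 (mkposreal c Hc))) as [N HN].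
    exists N. intros n Hn. specialize (HN n Hn). apply Rabs_def2 in HN. simpl in HN. lra. }
  assert (Hhalf : LimInf_seq (fun n => c / 2 * q n) = m_infty).
  { apply is_LimInf_seq_unique.
    pose proof (is_LimInf_LimInf_seq q) as Hi. rewrite Ei in Hi.
    pose proof (is_LimInf_seq_scal_pos (c / 2) q m_infty ltac:(lra) Hi) as H.
    unfold Rbar_mult, Rbar_mult' in H.
    destruct Rle_dec; [destruct Rle_lt_or_eq_dec|]; try lra. exact H. }
  assert (H : Rbar_le (LimInf_seq (fun n => a n * q n)) (LimInf_seq (fun n => c / 2 * q n))).
  { apply LimInf_le. eapply filter_imp; [|exact Hpos]. intros n Hn. specialize (Hq n). nra. }
  rewrite Hhalf in H. apply Lim_seq_m_infty.
  - eapply filter_imp; [|exact Hpos]. intros n Hn. specialize (Hq n). nra.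
  - destruct (LimInf_seq (fun n => a n * q n)); simpl in H; now try contradiction.
Qed.

Lemma real_Lim_seq_mult_cvg_pos (a q : nat -> R) (c : R) :
  (forall n, q n <= 0) -> is_lim_seq a c -> 0 < c ->
  real (Lim_seq (fun n => a n * q n)) = c * real (Lim_seq q).
Proof.
  intros Hq Ha Hc.
  assert (Hs : Rbar_le (LimSup_seq q) 0).
  { rewrite <- (LimSup_seq_const 0). apply LimSup_le. now exists O. }
  pose proof (LimSup_LimInf_seq_le q) as Hle.
  destruct (LimInf_seq q) as [i| |] eqn:Ei.
  - destruct (LimSup_seq q) as [s| |] eqn:Es; simpl in Hs, Hle; try contradiction.
    rewrite (Lim_seq_mult_cvg_bounded a q c Ha (LimSup_LimInf_bounded_seq q s i Es Ei)).
    apply real_Rbar_mult.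
  - destruct (LimSup_seq q); simpl in Hs, Hle; contradiction.
  - rewrite (Lim_seq_m_infty q), (Lim_seq_mult_cvg_m_infty a q c); auto.
    + simpl. ring.
    + now exists O.
Qed.

Lemma real_Lim_seq_mult_cvg_nonpos (a q : nat -> R) (c : R) :
  (forall n, q n <= 0) -> is_lim_seq a c -> c <> 0 ->
  real (Lim_seq (fun n => a n * q n)) = c * real (Lim_seq q).
Proof.
  intros Hq Ha Hc. destruct (Rlt_or_le 0 c) as [Hpos|Hneg].
  - now apply real_Lim_seq_mult_cvg_pos.
  - rewrite (Lim_seq_ext _ (fun n => - (- a n * q n))) by (intros; ring).
    rewrite Lim_seq_opp.
    pose proof (real_Lim_seq_mult_cvg_pos (fun n => - a n) q (- c) Hq
      (proj1 (is_lim_seq_opp a c) Ha) ltac:(lra)) as H.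
    destruct (Lim_seq (fun n => - a n * q n)); simpl in *; lra.
Qed.

Lemma bounded_seq_scal (c : R) (q : nat -> R) :
  bounded_seq q -> bounded_seq (fun n => c * q n).
Proof.
  intros [M HM]. exists (Rabs c * M). eapply filter_imp; [|exact HM].
  intros n Hn. rewrite Rabs_mult. apply Rmult_le_compat_l; [apply Rabs_pos | exact Hn].
Qed.

(* Boundedness is needed: [Lim_seq] is (limsup + liminf) / 2 with +oo + -oo = 0. *)
Lemma Lim_seq_plus_cvg_bounded (w e : nat -> R) (l : R) :
  bounded_seq w -> is_lim_seq e l ->
  Lim_seq (fun n => w n + e n) = Rbar_plus (Lim_seq w) l.
Proof.
  intros Hw He. destruct (bounded_seq_LimSup_LimInf w Hw) as [s [i [Es Ei]]].
  unfold Lim_seq. rewrite (LimSup_seq_plus_cvg _ _ _ He), (LimInf_seq_plus_cvg _ _ _ He), Es, Ei.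
  simpl. f_equal. field.
Qed.

Lemma real_Lim_seq_plus_mult_cvg (a b q : nat -> R) (ca cb : R) :
  is_lim_seq a ca -> is_lim_seq b cb ->
  (real (Lim_seq q) <> 0 \/ forall n, a n = 0) ->
  real (Lim_seq (fun n => b n + a n * q n)) = cb + ca * real (Lim_seq q).
Proof.
  intros Ha Hb [Hq|Ha0].
  - apply real_Lim_seq_bounded_seq in Hq.
    destruct (bounded_seq_LimSup_LimInf q Hq) as [s [i [Es Ei]]].
    assert (Hrest : is_lim_seq (fun n => b n + (a n - ca) * q n) (cb + 0)).
    { apply is_lim_seq_plus'; auto. apply is_lim_seq_mult_null_bounded; auto.
      replace 0 with (ca - ca) by ring. apply is_lim_seq_minus'; auto. apply is_lim_seq_const. }
    rewrite (Lim_seq_ext _ (fun n => ca * q n + (b n + (a n - ca) * q n))) by (intros; ring).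
    rewrite (Lim_seq_plus_cvg_bounded _ _ _ (bounded_seq_scal ca q Hq) Hrest).
    rewrite Lim_seq_scal_l. unfold Lim_seq at 1 2. rewrite Es, Ei.
    simpl. ring.
  - rewrite (Lim_seq_ext _ b) by (intros n; rewrite Ha0; ring).
    replace ca with 0.
    + rewrite (is_lim_seq_unique _ _ Hb). simpl. ring.
    + apply is_lim_seq_unique in Ha. rewrite (Lim_seq_ext _ (fun _ => 0)), Lim_seq_const in Ha by auto.
      now injection Ha.
Qed.

(** * Chain and product rules for Coquelicot's [Derive] *)

Definition diff_quot (f : R -> R) (x : R) (n : nat) : R :=
  (f (x + Rbar_loc_seq 0 n) - f x) / Rbar_loc_seq 0 n.

Lemma Derive_diff_quot (f : R -> R) (x : R) : Derive f x = real (Lim_seq (diff_quot f x)).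
Proof. reflexivity. Qed.

Lemma Rbar_loc_seq_0_gt0 (n : nat) : 0 < Rbar_loc_seq 0 n.
Proof.
  simpl. rewrite Rplus_0_l. apply Rinv_0_lt_compat. pose proof (pos_INR n). lra.
Qed.

Lemma is_lim_seq_loc_seq_right (x : R) : is_lim_seq (fun n => x + Rbar_loc_seq 0 n) x.
Proof.
  replace (Finite x) with (Finite (x + 0)) by (f_equal; ring).
  apply is_lim_seq_plus'; [apply is_lim_seq_const | apply (is_lim_seq_Rbar_loc_seq 0)].
Qed.

Lemma is_lim_seq_diff_quot (f : R -> R) (x l : R) :
  is_derive f x l -> is_lim_seq (diff_quot f x) l.
Proof.
  intros Hf. apply is_derive_Reals in Hf. apply is_lim_seq_spec. intros eps.
  destruct (Hf eps (cond_pos eps)) as [d Hd].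
  pose proof (is_lim_seq_Rbar_loc_seq 0) as H0. apply is_lim_seq_spec in H0.
  destruct (H0 d) as [N HN]. exists N. intros n Hn.
  pose proof (Rbar_loc_seq_0_gt0 n). specialize (HN n Hn).
  apply Hd; [lra|]. rewrite Rminus_0_r in HN. exact HN.
Qed.

Definition slope (G : R -> R) (v0 g v : R) : R :=
  if Req_EM_T v v0 then g else (G v - G v0) / (v - v0).

Lemma slope_spec (G : R -> R) (v0 g v : R) : G v - G v0 = slope G v0 g v * (v - v0).
Proof. unfold slope. destruct Req_EM_T as [->|Hne]; [ring | field; lra]. Qed.

Lemma is_lim_seq_slope (G : R -> R) (v0 g : R) (s : nat -> R) :
  is_derive G v0 g -> is_lim_seq s v0 -> is_lim_seq (fun n => slope G v0 g (s n)) g.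
Proof.
  intros HG Hs. apply is_derive_Reals in HG. apply is_lim_seq_spec in Hs.
  apply is_lim_seq_spec. intros eps.
  destruct (HG eps (cond_pos eps)) as [d Hd]. destruct (Hs d) as [N HN].
  exists N. intros n Hn. unfold slope. destruct Req_EM_T as [E|E].
  - rewrite Rminus_diag, Rabs_R0. apply cond_pos.
  - specialize (Hd (s n - v0) ltac:(lra) (HN n Hn)).
    now replace (v0 + (s n - v0)) with (s n) in Hd by ring.
Qed.

Lemma continuity_pt_is_derive (f : R -> R) (x l : R) : is_derive f x l -> continuity_pt f x.
Proof.
  intros Hf. apply derivable_continuous_pt. exists l. now apply is_derive_Reals.
Qed.

(* The hypotheses only control Coquelicot's total [Derive] of [u], a limit of right
   difference quotients along 1/(n+1) that need not be a derivative; so [u] is not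
   assumed differentiable, and monotonicity keeps its quotients of one sign. *)
Lemma Derive_comp_nonincr (G u : R -> R) (x g : R) :
  continuity_pt u x -> (forall h, 0 < h -> u (x + h) <= u x) ->
  is_derive G (u x) g -> g <> 0 ->
  Derive (fun y => G (u y)) x = g * Derive u x.
Proof.
  intros Hu Hmon HG Hg. rewrite !Derive_diff_quot.
  rewrite <- (real_Lim_seq_mult_cvg_nonpos
    (fun n => slope G (u x) g (u (x + Rbar_loc_seq 0 n))) (diff_quot u x) g); auto.
  - f_equal. apply Lim_seq_ext. intros n. unfold diff_quot.
    rewrite (slope_spec G (u x) g). pose proof (Rbar_loc_seq_0_gt0 n). field. lra.
  - intros n. pose proof (Rbar_loc_seq_0_gt0 n) as Hh. specialize (Hmon _ Hh).
    unfold diff_quot. apply Rmult_le_0_r; [lra|]. now apply Rlt_le, Rinv_0_lt_compat.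
  - apply is_lim_seq_slope; auto.
    apply (is_lim_seq_continuous u); auto. apply is_lim_seq_loc_seq_right.
Qed.

(* If [Derive u x <> 0] the difference quotients of [u] are bounded; otherwise the
   hypothesis [E x = Derive u x] makes the cross term vanish. *)
Lemma Derive_comp_mult (F u E : R -> R) (x dF dE : R) :
  continuity_pt u x -> is_derive F (u x) dF -> is_derive E x dE -> E x = Derive u x ->
  Derive (fun y => F (u y) * E y) x = dF * E x * Derive u x + F (u x) * dE.
Proof.
  intros Hu HF HE HEx. rewrite !Derive_diff_quot.
  rewrite (Lim_seq_ext _ (fun n => F (u (x + Rbar_loc_seq 0 n)) * diff_quot E x n
      + E x * slope F (u x) dF (u (x + Rbar_loc_seq 0 n)) * diff_quot u x n)).
  2: { intros n. unfold diff_quot. pose proof (Rbar_loc_seq_0_gt0 n).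
       pose proof (slope_spec F (u x) dF (u (x + Rbar_loc_seq 0 n))).
       replace (F (u x)) with (F (u (x + Rbar_loc_seq 0 n))
         - slope F (u x) dF (u (x + Rbar_loc_seq 0 n)) * (u (x + Rbar_loc_seq 0 n) - u x)) at 1
         by lra.
       field. lra. }
  rewrite (real_Lim_seq_plus_mult_cvg _ _ _ (E x * dF) (F (u x) * dE)).
  - rewrite <- Derive_diff_quot. ring.
  - apply (is_lim_seq_scal_l _ (E x) dF), is_lim_seq_slope; auto.
    apply (is_lim_seq_continuous u); auto. apply is_lim_seq_loc_seq_right.
  - apply is_lim_seq_mult'; [|now apply is_lim_seq_diff_quot].
    apply (is_lim_seq_continuous (fun y => F (u y))); [|apply is_lim_seq_loc_seq_right].
    apply (continuity_pt_comp u F); auto. now apply (continuity_pt_is_derive F (u x) dF).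
  - rewrite <- Derive_diff_quot. destruct (Req_dec (Derive u x) 0) as [H0|H0].
    + right. intros n. rewrite HEx, H0. ring.
    + now left.
Qed.

Lemma Derive_n_comp_2 (G g u : R -> R) (x dg : R) :
  locally x (fun y => continuity_pt u y /\ (forall h, 0 < h -> u (y + h) <= u y) /\
    is_derive G (u y) (g (u y)) /\ g (u y) <> 0) ->
  is_derive g (u x) dg -> ex_derive (Derive u) x ->
  Derive_n (fun y => G (u y)) 2 x = dg * Derive u x ^ 2 + g (u x) * Derive_n u 2 x.
Proof.
  intros Hloc Hg Hu.
  change (Derive (Derive (fun y => G (u y))) x = dg * Derive u x ^ 2 + g (u x) * Derive (Derive u) x).
  transitivity (Derive (fun y => g (u y) * Derive u y) x).
  - apply Derive_ext_loc. eapply filter_imp; [|exact Hloc].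
    intros y (Huy & Hmon & HG & Hg0). now apply Derive_comp_nonincr.
  - destruct (locally_singleton _ _ Hloc) as [Hux _].
    rewrite (Derive_comp_mult g u (Derive u) x dg (Derive (Derive u) x)); auto.
    + ring.
    + now apply Derive_correct.
Qed.

Lemma Derive_n_comp_comp_2 (F F' psi psi' u : R -> R) (x dF' dpsi' : R) :
  locally x (fun y => continuity_pt u y /\ (forall h, 0 < h -> u (y + h) <= u y) /\
    is_derive psi (u y) (psi' (u y)) /\ psi' (u y) <> 0 /\
    is_derive F (psi (u y)) (F' (psi (u y))) /\ F' (psi (u y)) <> 0) ->
  is_derive psi' (u x) dpsi' -> is_derive F' (psi (u x)) dF' -> ex_derive (Derive u) x ->
  Derive_n (fun y => F (psi (u y))) 2 x =
    dF' * Derive (fun y => psi (u y)) x ^ 2 + F' (psi (u x)) * Derive_n (fun y => psi (u y)) 2 x.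
Proof.
  intros Hloc Hpsi' HF' Hu.
  destruct (locally_singleton _ _ Hloc) as (Hux & Hmon & Hpsi & Hpsi0 & HF & HF0).
  rewrite (Derive_n_comp_2 (fun v => F (psi v)) (fun v => F' (psi v) * psi' v) u x
    (dF' * psi' (u x) ^ 2 + F' (psi (u x)) * dpsi')).
  - rewrite (Derive_n_comp_2 psi psi' u x dpsi'), (Derive_comp_nonincr psi u x (psi' (u x))); auto.
    + ring.
    + eapply filter_imp; [|exact Hloc]. intros y; tauto.
  - eapply filter_imp; [|exact Hloc]. intros y (Huy & Hmony & Hpsiy & Hpsi0y & HFy & HF0y).
    refine (conj Huy (conj Hmony (conj _ _))).
    + replace (F' (psi (u y)) * psi' (u y)) with (scal (psi' (u y)) (F' (psi (u y))))
        by (unfold scal; simpl; unfold mult; simpl; ring).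
      exact (is_derive_comp F psi (u y) _ _ HFy Hpsiy).
    + now apply Rmult_integral_contrapositive.
  - replace (dF' * psi' (u x) ^ 2 + F' (psi (u x)) * dpsi')
      with (plus (mult (scal (psi' (u x)) dF') (psi' (u x))) (mult (F' (psi (u x))) dpsi'))
      by (unfold plus, mult, scal; simpl; unfold mult; simpl; ring).
    apply (is_derive_mult (fun v => F' (psi v)) psi'); auto.
    + exact (is_derive_comp F' psi (u x) _ _ HF' Hpsi).
    + intros; apply Rmult_comm.
  - exact Hu.
Qed.

(** * The explicit solution as a function of [1 + phi0] *)

Lemma is_derive_Rpower (e A : R) : 0 < A -> is_derive (fun x => Rpower x e) A (e * Rpower A e / A).
Proof.
  intros HA. apply is_derive_Reals.
  replace (e * Rpower A e / A) with (e * Rpower A (e - 1)).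
  - now apply derivable_pt_lim_power.
  - unfold Rminus. rewrite Rpower_plus, Rpower_Ropp, Rpower_1 by exact HA. field. lra.
Qed.

Lemma Rpower_gt0 (x e : R) : 0 < Rpower x e.
Proof. apply exp_pos. Qed.

Lemma ln_le0 (v : R) : 0 < v <= 1 -> ln v <= 0.
Proof. intros Hv. rewrite <- ln_1. now apply ln_le. Qed.

Lemma Derive_Rpower (e A : R) : 0 < A -> Derive (fun x => Rpower x e) A = e * Rpower A e / A.
Proof. intros HA. now apply is_derive_unique, is_derive_Rpower. Qed.

(* [wsol u0 alpha rho t x] is [prof alpha (rho * (alpha + 1) * t) (1 + phi0 u0 x)]
   by unfolding. *)
Section Profile.

Variables al K : R.
Hypothesis al1_gt0 : 0 < al + 1.

Definition prof_base (A : R) : R := Rpower A (al + 1) - K.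
Definition prof_S (A : R) : R := Rpower (prof_base A) (1 / (al + 1)).
Definition prof (A : R) : R := exp (1 - prof_S A).
Definition prof_d1 (A : R) : R := - (prof A * prof_S A * Rpower A al / prof_base A).
Definition prof_d2 (A : R) : R :=
  prof A * (prof_S A ^ 2 * Rpower A al ^ 2 / prof_base A ^ 2
    + al * prof_S A * Rpower A al ^ 2 / prof_base A ^ 2
    - al * prof_S A * Rpower A al / (A * prof_base A)).

Lemma is_derive_prof_base (A : R) : 0 < A -> is_derive prof_base A ((al + 1) * Rpower A al).
Proof.
  intros HA. unfold prof_base. auto_derive.
  - eexists. now apply is_derive_Rpower.
  - rewrite Derive_Rpower by exact HA. rewrite Rpower_plus, Rpower_1 by exact HA. field. lra.
Qed.

Lemma is_derive_prof_S (A : R) : 0 < A -> 0 < prof_base A ->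
  is_derive prof_S A (prof_S A * Rpower A al / prof_base A).
Proof.
  intros HA HB. unfold prof_S. auto_derive.
  - split; [eexists; now apply is_derive_Rpower|split; [eexists; now apply is_derive_prof_base|easy]].
  - rewrite Derive_Rpower by exact HB.
    replace (Derive (fun x => prof_base x) A) with ((al + 1) * Rpower A al)
      by (symmetry; now apply is_derive_unique, is_derive_prof_base).
    unfold prof_S. field. split; lra.
Qed.

Lemma is_derive_prof (A : R) : 0 < A -> 0 < prof_base A -> is_derive prof A (prof_d1 A).
Proof.
  intros HA HB. unfold prof, prof_d1. auto_derive.
  - eexists. now apply is_derive_prof_S.
  - replace (Derive (fun x => prof_S x) A) with (prof_S A * Rpower A al / prof_base A)
      by (symmetry; now apply is_derive_unique, is_derive_prof_S).
    unfold prof, Rminus. field. lra.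
Qed.

Lemma is_derive_prof_d1 (A : R) : 0 < A -> 0 < prof_base A -> is_derive prof_d1 A (prof_d2 A).
Proof.
  intros HA HB. unfold prof_d1. auto_derive.
  - refine (conj _ (conj _ (conj _ (conj _ (conj _ I))))); try lra; eexists.
    + now apply is_derive_prof.
    + now apply is_derive_prof_S.
    + now apply is_derive_Rpower.
    + now apply is_derive_prof_base.
  - replace (Derive (fun x => prof x) A) with (prof_d1 A)
      by (symmetry; now apply is_derive_unique, is_derive_prof).
    replace (Derive (fun x => prof_S x) A) with (prof_S A * Rpower A al / prof_base A)
      by (symmetry; now apply is_derive_unique, is_derive_prof_S).
    replace (Derive (fun x => prof_base x) A) with ((al + 1) * Rpower A al)
      by (symmetry; now apply is_derive_unique, is_derive_prof_base).
    rewrite Derive_Rpower by exact HA.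
    unfold prof_d1, prof_d2. field. split; lra.
Qed.

Lemma prof_d1_lt0 (A : R) : 0 < prof_base A -> prof_d1 A < 0.
Proof.
  intros HB. unfold prof_d1, Rdiv. apply Ropp_lt_gt_0_contravar.
  repeat apply Rmult_lt_0_compat; try apply Rpower_gt0; try apply exp_pos.
  now apply Rinv_0_lt_compat.
Qed.

End Profile.

Lemma is_derive_shift (f : R -> R) (p l : R) :
  is_derive f (1 + p) l -> is_derive (fun q => f (1 + q)) p l.
Proof.
  intros Hf. replace l with (scal 1 l) by (unfold scal; simpl; unfold mult; simpl; ring).
  apply (is_derive_comp f (fun q => 1 + q)); [exact Hf|].
  auto_derive; [easy|ring].
Qed.

Lemma Derive_n_wsol_2 (u0 : R -> R) (alpha rho t x : R) :
  0 < alpha + 1 ->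
  locally x (fun y => continuity_pt u0 y /\ (forall h, 0 < h -> u0 (y + h) <= u0 y) /\
    0 < u0 y <= 1 /\ 0 < prof_base alpha (rho * (alpha + 1) * t) (1 + phi0 u0 y)) ->
  ex_derive (Derive u0) x ->
  Derive_n (wsol u0 alpha rho t) 2 x =
    prof_d2 alpha (rho * (alpha + 1) * t) (1 + phi0 u0 x) * Derive (phi0 u0) x ^ 2
    + prof_d1 alpha (rho * (alpha + 1) * t) (1 + phi0 u0 x) * Derive_n (phi0 u0) 2 x.
Proof.
  intros Hal Hloc Hu. set (K := rho * (alpha + 1) * t).
  assert (HA : forall v, 0 < v <= 1 -> 0 < 1 + - ln v).
  { intros v Hv. pose proof (ln_le0 v Hv). lra. }
  apply (Derive_n_comp_comp_2 (fun p => prof alpha K (1 + p)) (fun p => prof_d1 alpha K (1 + p))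
    (fun v => - ln v) (fun v => - / v) u0 x (prof_d2 alpha K (1 + phi0 u0 x)) (/ (u0 x * u0 x))).
  - eapply filter_imp; [|exact Hloc]. intros y (Hcont & Hmon & Hu0 & HB).
    refine (conj Hcont (conj Hmon (conj _ (conj _ (conj _ _))))).
    + auto_derive; [lra | field; lra].
    + apply Ropp_neq_0_compat, Rinv_neq_0_compat. lra.
    + apply is_derive_shift, is_derive_prof; [exact Hal | now apply HA | exact HB].
    + apply Rlt_not_eq, prof_d1_lt0, HB.
  - destruct (locally_singleton _ _ Hloc) as (_ & _ & Hu0 & _).
    auto_derive; [lra | field; lra].
  - destruct (locally_singleton _ _ Hloc) as (_ & _ & Hu0 & HB).
    apply is_derive_shift, is_derive_prof_d1; [exact Hal | now apply HA | exact HB].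
  - exact Hu.
Qed.

Lemma quad_combination_bound (k1 k2 k3 al X Y m : R) :
  0 <= k1 <= 1 -> 0 <= k2 <= 1 -> 0 <= k3 <= 1 -> 0 <= al ->
  Rabs X <= m -> Rabs Y <= m -> m <= 1 ->
  Rabs ((k1 + al * k2 - al * k3) * X ^ 2 - Y) <= (2 + 2 * al) * m.
Proof.
  intros Hk1 Hk2 Hk3 Hal HX HY Hm.
  assert (HX2 : 0 <= X ^ 2 <= m).
  { apply Rabs_le_between in HX. split; nra. }
  assert (Hc : - al <= k1 + al * k2 - al * k3 <= 1 + al) by nra.
  assert (Hcs : - al * m <= (k1 + al * k2 - al * k3) * X ^ 2 <= (1 + al) * m) by nra.
  apply Rabs_le_between in HY. apply Rabs_le. split; nra.
Qed.

Lemma Rpower_ge1 (x e : R) : 1 <= x -> 0 <= e -> 1 <= Rpower x e.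
Proof. intros Hx He. rewrite <- (Rpower_O x) by lra. now apply Rle_Rpower. Qed.

Lemma prof_d2_d1_bound (al K A P P2 m : R) :
  0 < al -> 1 <= A -> 1 <= prof_base al K A ->
  Rpower A al * Rabs P <= m -> m <= 1 -> Rabs P2 <= Rabs P ->
  Rabs (prof_d2 al K A * P ^ 2 + prof_d1 al K A * P2)
    <= (2 + 2 * al) * m * (prof al K A / Rpower (1 - ln (prof al K A)) al).
Proof.
  intros Hal HA HB HP Hm HP2.
  set (S := prof_S al K A). set (B := prof_base al K A) in *.
  set (a := Rpower A al) in *. set (w := prof al K A). set (sg := Rpower S al).
  assert (HS : 1 <= S) by (apply Rpower_ge1; [exact HB | apply Rlt_le, Rdiv_lt_0_compat; lra]).
  assert (Hsg : 1 <= sg) by (apply Rpower_ge1; lra).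
  assert (Ha : 1 <= a) by (apply Rpower_ge1; lra).
  assert (HsgS : sg * S = B).
  { unfold sg. rewrite <- (Rpower_1 S) at 2 by lra.
    rewrite <- Rpower_plus. unfold S, prof_S. fold B. rewrite Rpower_mult.
    replace (1 / (al + 1) * (al + 1)) with 1 by (field; lra). apply Rpower_1. lra. }
  assert (Hw : 0 < w) by apply exp_pos.
  assert (Hlnw : 1 - ln w = S) by (unfold w, prof; rewrite ln_exp; fold S; ring).
  assert (E : prof_d2 al K A * P ^ 2 + prof_d1 al K A * P2 = w / sg *
    ((S / B + al * / B - al * / (a * A)) * (a * P) ^ 2 - a * P2)).
  { unfold prof_d2, prof_d1. fold S B a w. rewrite <- HsgS. field. lra. }
  rewrite E, Hlnw, Rabs_mult, (Rabs_right (w / sg)) by (apply Rle_ge, Rlt_le, Rdiv_lt_0_compat; lra).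
  fold sg. rewrite (Rmult_comm ((2 + 2 * al) * m)).
  apply Rmult_le_compat_l; [apply Rlt_le, Rdiv_lt_0_compat; lra|].
  apply quad_combination_bound; try lra.
  - split; [apply Rlt_le, Rdiv_lt_0_compat; lra|].
    rewrite <- HsgS. unfold Rdiv. rewrite Rinv_mult, Rmult_comm, Rmult_assoc, Rinv_l, Rmult_1_r by lra.
    rewrite <- Rinv_1. apply Rinv_le_contravar; lra.
  - split; [apply Rlt_le, Rinv_0_lt_compat; lra|].
    rewrite <- Rinv_1. apply Rinv_le_contravar; lra.
  - split; [apply Rlt_le, Rinv_0_lt_compat; nra|].
    rewrite <- Rinv_1. apply Rinv_le_contravar; nra.
  - rewrite Rabs_mult, Rabs_right by lra. exact HP.
  - rewrite Rabs_mult, Rabs_right by lra. apply Rle_trans with (a * Rabs P); [|exact HP].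
    apply Rmult_le_compat_l; lra.
Qed.

(** * Estimates beyond [x0 t] *)

Lemma continuity_pt_of_uniform_continuity (u : R -> R) :
  (forall e, 0 < e -> exists d, 0 < d /\ forall x y, Rabs (x - y) < d -> Rabs (u x - u y) < e) ->
  forall x, continuity_pt u x.
Proof.
  intros Huc x e He. destruct (Huc e He) as [d [Hd H]]. exists d. split; [exact Hd|].
  intros y [_ Hy]. now apply H.
Qed.

Lemma exists_level_point (u : R -> R) (M c : R) :
  (forall y, continuity_pt u y) -> is_lim u p_infty 0 -> 0 < c < u M ->
  exists z, M <= z /\ u z = c.
Proof.
  intros Hcont Hlim Hc. apply is_lim_spec in Hlim.
  destruct (Hlim (mkposreal c (proj1 Hc))) as [N HN]. simpl in HN.
  set (N' := Rmax (M + 1) (N + 1)).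
  assert (HuN : u N' < c).
  { specialize (HN N' ltac:(unfold N'; pose proof (Rmax_r (M + 1) (N + 1)); lra)).
    rewrite Rminus_0_r in HN. apply Rabs_def2 in HN. lra. }
  destruct (IVT (fun y => c - u y) M N') as [z [[HMz _] Hz]].
  - intros y. apply continuity_pt_minus; [apply continuity_pt_const; now intros ? ? | apply Hcont].
  - unfold N'. pose proof (Rmax_l (M + 1) (N + 1)). lra.
  - lra.
  - lra.
  - exists z. split; [exact HMz | lra].
Qed.

Lemma le_of_Lub_Rbar_le (E : R -> Prop) (z x : R) : E z -> Rbar_le (Lub_Rbar E) x -> z <= x.
Proof.
  intros Hz Hx. destruct (Lub_Rbar_correct E) as [Hub _].
  exact (Rbar_le_trans _ _ _ (Hub z Hz) Hx).
Qed.

Lemma Rpower_inv_exponent (x e : R) : 0 < x -> 0 < e -> Rpower (Rpower x e) (1 / e) = x.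
Proof.
  intros Hx He. rewrite Rpower_mult. replace (e * (1 / e)) with 1 by (field; lra).
  now apply Rpower_1.
Qed.

Lemma prof_base_ge1_beyond_x0 (u0 : R -> R) (alpha rho M t x : R) :
  0 < alpha + 1 -> (forall y, continuity_pt u0 y) -> (forall y, 0 < u0 y <= 1) ->
  is_lim u0 p_infty 0 -> (forall y z, M <= y -> y <= z -> u0 z <= u0 y) ->
  Rpower (1 + phi0 u0 M) (alpha + 1) < rho * (alpha + 1) * t ->
  Rbar_le (x0 u0 alpha rho t) x ->
  M <= x /\ 1 <= prof_base alpha (rho * (alpha + 1) * t) (1 + phi0 u0 x).
Proof.
  intros Hal Hcont Hu Hlim Hmon HK Hx.
  set (K := rho * (alpha + 1) * t) in *.
  set (Q := 1 + phi0 u0 M) in *.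
  set (R1 := Rpower (K + 1) (1 / (alpha + 1))).
  assert (HQ : 1 <= Q).
  { unfold Q, phi0. pose proof (ln_le0 _ (Hu M)). lra. }
  assert (HQR : Q < R1).
  { rewrite <- (Rpower_inv_exponent Q (alpha + 1)) by lra.
    apply Rlt_Rpower_l; [apply Rdiv_lt_0_compat; lra|]. split; [apply Rpower_gt0 | lra]. }
  set (c := exp (1 - R1)).
  assert (Hc : 0 < c < u0 M).
  { split; [apply exp_pos|]. rewrite <- (exp_ln (u0 M)) by apply Hu.
    apply exp_increasing. unfold Q, phi0 in HQR. lra. }
  destruct (exists_level_point u0 M c Hcont Hlim Hc) as [z [HMz Hz]].
  assert (Hzx : z <= x) by exact (le_of_Lub_Rbar_le _ z x Hz Hx).
  split; [lra|].
  assert (HA : R1 <= 1 + phi0 u0 x).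
  { assert (ln (u0 x) <= ln c) by (apply ln_le; [apply Hu | rewrite <- Hz; apply Hmon; lra]).
    unfold c in H. rewrite ln_exp in H. unfold phi0. lra. }
  unfold prof_base. apply Rle_trans with (Rpower R1 (alpha + 1) - K).
  - unfold R1. rewrite Rpower_mult. replace (1 / (alpha + 1) * (alpha + 1)) with 1 by (field; lra).
    rewrite Rpower_1; [lra|]. pose proof (Rpower_gt0 Q (alpha + 1)). lra.
  - apply Rplus_le_compat_r, Rle_Rpower_l; lra.
Qed.

Lemma locally_prof_base_gt0 (u0 : R -> R) (al K x : R) :
  0 < al + 1 -> (forall y, continuity_pt u0 y) -> (forall y, 0 < u0 y <= 1) ->
  0 < prof_base al K (1 + phi0 u0 x) ->
  locally x (fun y => 0 < prof_base al K (1 + phi0 u0 y)).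
Proof.
  intros Hal Hcont Hu HB.
  assert (HA : 0 < 1 + - ln (u0 x)).
  { pose proof (ln_le0 _ (Hu x)). lra. }
  assert (Hc : continuity_pt (fun y => prof_base al K (1 + phi0 u0 y)) x).
  { apply (continuity_pt_comp u0 (fun v => prof_base al K (1 + - ln v))); [apply Hcont|].
    apply (continuity_pt_is_derive _ _ (scal (- / u0 x) ((al + 1) * Rpower (1 + - ln (u0 x)) al))).
    apply (is_derive_comp (prof_base al K) (fun v => 1 + - ln v)).
    - now apply is_derive_prof_base.
    - auto_derive; [apply Hu | ring]. }
  apply continuity_pt_filterlim in Hc.
  exact (Hc (fun r => 0 < r) (open_gt 0 _ HB)).
Qed.

Lemma phi0_gt1_eventually (u0 : R -> R) :
  (forall y, 0 < u0 y) -> is_lim u0 p_infty 0 -> Rbar_locally p_infty (fun y => 1 < phi0 u0 y).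
Proof.
  intros Hu Hlim. apply is_lim_spec in Hlim.
  destruct (Hlim (mkposreal (exp (- 1)) (exp_pos _))) as [N HN]. exists N. intros y Hy.
  specialize (HN y Hy). simpl in HN. rewrite Rminus_0_r, Rabs_right in HN by (apply Rle_ge, Rlt_le, Hu).
  apply ln_increasing in HN; [|apply Hu]. rewrite ln_exp in HN. unfold phi0. lra.
Qed.

Lemma Rpower_1plus_abs_le (al p m P : R) :
  0 <= al -> 1 <= p -> Rabs P <= m / Rpower 2 al * Rabs (Rpower p (- al)) ->
  Rpower (1 + p) al * Rabs P <= m.
Proof.
  intros Hal Hp HP.
  rewrite Rpower_Ropp, (Rabs_right (/ Rpower p al)) in HP
    by (apply Rle_ge, Rlt_le, Rinv_0_lt_compat, Rpower_gt0).
  assert (H2p : Rpower (1 + p) al <= Rpower 2 al * Rpower p al).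
  { rewrite Rpower_mult_distr by lra. apply Rle_Rpower_l; lra. }
  pose proof (Rpower_gt0 2 al). pose proof (Rpower_gt0 p al). pose proof (Rpower_gt0 (1 + p) al).
  apply Rle_trans with (Rpower 2 al * Rpower p al * (m / Rpower 2 al * / Rpower p al)).
  - apply Rmult_le_compat; try lra; apply Rabs_pos.
  - right. field. lra.
Qed.

Lemma exists_small_factor (al eps : R) :
  0 < al -> 0 < eps -> exists m, 0 < m /\ m <= 1 /\ (2 + 2 * al) * m < eps.
Proof.
  intros Hal Heps. exists (Rmin 1 (eps / (4 + 4 * al))). split; [|split].
  - apply Rmin_glb_lt; [lra | apply Rdiv_lt_0_compat; lra].
  - apply Rmin_l.
  - apply Rle_lt_trans with ((2 + 2 * al) * (eps / (4 + 4 * al))).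
    + apply Rmult_le_compat_l; [lra | apply Rmin_r].
    + replace ((2 + 2 * al) * (eps / (4 + 4 * al))) with (eps / 2) by (field; lra). lra.
Qed.

Lemma lt_mul_of_div_add1_le (Q c t : R) : 0 < c -> Q / c + 1 <= t -> Q < c * t.
Proof.
  intros Hc Ht. apply Rmult_le_compat_l with (r := c) in Ht; [|lra].
  replace (c * (Q / c + 1)) with (Q + c) in Ht by (field; lra). lra.
Qed.

Lemma Derive_n_wsol_2_lt (u0 : R -> R) (alpha rho t x xi0 m eps : R) :
  0 < alpha -> (forall y, continuity_pt u0 y) -> (forall y, 0 < u0 y <= 1) ->
  (forall y z, xi0 <= y -> y <= z -> u0 z <= u0 y) -> xi0 < x -> ex_derive (Derive u0) x ->
  1 <= prof_base alpha (rho * (alpha + 1) * t) (1 + phi0 u0 x) ->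
  Rpower (1 + phi0 u0 x) alpha * Rabs (Derive (phi0 u0) x) <= m -> m <= 1 ->
  Rabs (Derive_n (phi0 u0) 2 x) <= Rabs (Derive (phi0 u0) x) -> (2 + 2 * alpha) * m < eps ->
  Rabs (Derive_n (wsol u0 alpha rho t) 2 x)
    < eps * wsol u0 alpha rho t x / Rpower (1 - ln (wsol u0 alpha rho t x)) alpha.
Proof.
  intros Hal Hcont Hu Hmon Hx Hu2 HB HP Hm HP2 Hmeps.
  assert (Hloc : locally x (fun y => continuity_pt u0 y /\ (forall h, 0 < h -> u0 (y + h) <= u0 y)
    /\ 0 < u0 y <= 1 /\ 0 < prof_base alpha (rho * (alpha + 1) * t) (1 + phi0 u0 y))).
  { apply filter_and; [now apply filter_forall|]. apply filter_and.
    - apply (locally_open (fun y => xi0 < y)); [apply open_gt | | exact Hx].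
      intros y Hy h Hh. apply Hmon; lra.
    - apply filter_and; [now apply filter_forall|]. apply locally_prof_base_gt0; auto; lra. }
  assert (HA : 1 <= 1 + phi0 u0 x).
  { unfold phi0. pose proof (ln_le0 _ (Hu x)). lra. }
  rewrite (Derive_n_wsol_2 u0 alpha rho t x ltac:(lra) Hloc Hu2).
  eapply Rle_lt_trans; [now apply prof_d2_d1_bound with (m := m)|].
  unfold Rdiv. rewrite (Rmult_assoc eps).
  apply Rmult_lt_compat_r; [|exact Hmeps].
  apply Rmult_lt_0_compat; [apply exp_pos | apply Rinv_0_lt_compat, Rpower_gt0].
Qed.

Theorem lemma3p1 (alpha : R) (u0 : R -> R) (rho : R) :
  0 < alpha ->
  (* u0 : R -> [0,1], u0 > 0 *)
  (forall x, 0 < u0 x /\ u0 x <= 1) ->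
  (* uniformly continuous *)
  (forall e, 0 < e -> exists d, 0 < d /\
     forall x y, Rabs (x - y) < d -> Rabs (u0 x - u0 y) < e) ->
  (* liminf_{x -> -oo} u0 > 0 *)
  (exists c, 0 < c /\ exists M, forall x, x <= M -> c <= u0 x) ->
  (* lim_{x -> +oo} u0 = 0 *)
  is_lim u0 p_infty 0 ->
  (* C^2 and nonincreasing on [xi0, +oo) for some xi0 > 0 *)
  (exists xi0, 0 < xi0 /\
     (forall x, xi0 < x -> ex_derive_n u0 2 x /\ continuous (Derive_n u0 2) x) /\
     (forall x y, xi0 <= x -> x <= y -> u0 y <= u0 x)) ->
  (* phi0' = o(phi0^(-alpha)) and phi0'' = o(phi0') as x -> +oo *)
  little_o_pinfty (Derive (phi0 u0)) (fun x => Rpower (phi0 u0 x) (- alpha)) ->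
  little_o_pinfty (Derive_n (phi0 u0) 2) (Derive (phi0 u0)) ->
  0 < rho ->
  forall eps, 0 < eps ->
  exists tsharp, 0 < tsharp /\
    forall t x : R, tsharp <= t -> Rbar_le (x0 u0 alpha rho t) (Finite x) ->
      Rabs (Derive_n (wsol u0 alpha rho t) 2 x)
        < eps * wsol u0 alpha rho t x / Rpower (1 - ln (wsol u0 alpha rho t x)) alpha.
Proof.
  intros Hal Hu Huc _ Hlim [xi0 [_ [Hreg Hmon]]] Ho1 Ho2 Hrho eps Heps.
  pose proof (continuity_pt_of_uniform_continuity u0 Huc) as Hcont.
  destruct (exists_small_factor alpha eps Hal Heps) as [m (Hm0 & Hm1 & Hmeps)].
  destruct (Ho1 (m / Rpower 2 alpha) (Rdiv_lt_0_compat _ _ Hm0 (Rpower_gt0 2 alpha))) as [M1 HM1].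
  destruct (Ho2 1 Rlt_0_1) as [M2 HM2].
  assert (Hfar : Rbar_locally p_infty (fun y => xi0 < y /\ 1 < phi0 u0 y /\ M1 <= y /\ M2 <= y)).
  { apply filter_and; [exists xi0; intros; lra|].
    apply filter_and; [apply phi0_gt1_eventually; [intros; apply Hu | exact Hlim]|].
    apply filter_and; [exists M1 | exists M2]; intros; lra. }
  destruct Hfar as [M HM].
  set (Q := Rpower (1 + phi0 u0 (M + 1)) (alpha + 1)).
  assert (Hc : 0 < rho * (alpha + 1)) by (apply Rmult_lt_0_compat; lra).
  assert (HQ : 0 < Q / (rho * (alpha + 1))) by (apply Rdiv_lt_0_compat; [apply Rpower_gt0 | exact Hc]).
  exists (Q / (rho * (alpha + 1)) + 1). split; [lra|].
  intros t x Ht Hx.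
  destruct (prof_base_ge1_beyond_x0 u0 alpha rho (M + 1) t x ltac:(lra) Hcont Hu Hlim)
    as [HMx HB]; [| |exact Hx|].
  - intros y z Hy Hyz. apply Hmon; [|lra]. destruct (HM y ltac:(lra)). lra.
  - now apply lt_mul_of_div_add1_le.
  - destruct (HM x ltac:(lra)) as (Hx0 & Hphi & HM1x & HM2x).
    apply (Derive_n_wsol_2_lt u0 alpha rho t x xi0 m eps); auto.
    + exact (proj1 (Hreg x Hx0)).
    + apply Rpower_1plus_abs_le; [lra | lra | exact (HM1 x HM1x)].
    + specialize (HM2 x HM2x). lra.
Qed.
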